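(* Let $m,n,r$ be positive integers with $\gcd(m,n)=\gcd(m,r-1)=1$, $r^n\equiv 1 \pmod m$, and $m=p_1^{\alpha_1}p_2^{\alpha_2}\cdots p_k^{\alpha_k}$ with $k\ge 1$, $p_1,\dots,p_k$ distinct primes and $\alpha_i\ge 1$. Let $I=\{1,\dots,k\}$. For each nonempty $T\subseteq I$ let $e_T=\operatorname{lcm}_{i\in T}\operatorname{ord}_{p_i^{\alpha_i}}(r)$, where $\operatorname{ord}_{p_i^{\alpha_i}}(r)$ is the multiplicative order of $r$ modulo $p_i^{\alpha_i}$ (equivalently, $e_T$ is the least positive integer $e$ with $r^{e}\equiv 1 \pmod{p_i^{\alpha_i}}$ for all $i\in T$; it divides $n$). Then $$\psi(ZM(m,n,r))=m\,\psi(\mathbb{Z}_n)+\sum_{\emptyset\neq T\subseteq I}\ \prod_{i\in I\setminus T}p_i^{\alpha_i}\ \prod_{i\in T}\big(\psi(\mathbb{Z}_{p_i^{\alpha_i}})-p_i^{\alpha_i}\big)\ \psi\big(\langle b^{e_T}\rangle\big),$$ where $\langle b^{e_T}\rangle\cong\mathbb{Z}_{n/e_T}$ is the subgroup of $ZM(m,n,r)$ generated by $b^{e_T}$ (it is the centralizer in $\langle b\rangle$ of the subgroup of $\langle a\rangle$ of order $\prod_{i\in T}p_i^{\alpha_i}$). Here $\psi(\mathbb{Z}_{p^{\alpha}})=\frac{p^{2\alpha+1}+1}{p+1}$.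
   Context: For a finite group $G$, $\psi(G)=\sum_{x\in G} o(x)$ denotes the sum of the orders of all elements of $G$. For positive integers $m,n,r$ with $\gcd(m,n)=\gcd(m,r-1)=1$ and $r^n\equiv 1\pmod m$, the ZM-group is $ZM(m,n,r)=\langle a,b \mid a^m=b^n=1,\ b^{-1}ab=a^r\rangle$, a group of order $mn$ (these are exactly the finite groups all of whose Sylow subgroups are cyclic; $m$ is necessarily odd). *)

From mathcomp Require Import all_boot all_fingroup all_algebra all_solvable.
Set Implicit Arguments. Unset Strict Implicit. Unset Printing Implicit Defensive.

Definition psi (gT : finGroupType) (G : {set gT}) : nat := \sum_(x in G) #[x]%g.

(* The search is over 1 <= e <= q, which always suffices when coprime r q
   (the order divides totient q <= q); otherwise the value is q.+1 (junk). *)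
Definition ordmod (q r : nat) : nat :=
  (find (fun e => r ^ e.+1 == 1 %[mod q]) (iota 0 q)).+1.

(* Write the group as <[b]> * <[a]> with trivial intersection.  Since a conjugated
   by b^j is a^(r^j), (b^j a^i)^k = b^(jk) a^(i S_k) with S_k the geometric sum of
   the powers of r^j, so the order of b^j a^i is o(b^j) times the order of i S in
   Z_m, where S = S_(o(b^j)).  Summed over i, the latter is multiplicative in m
   (Chinese remainder theorem); on a factor p^alpha it is psi(Z_(p^alpha)) if
   r^j = 1 (mod p^alpha) and p^alpha otherwise.  Expanding the product over the
   prime-power factors as a sum over the sets T of factors where r^j = 1, that is
   e_T | j, and summing over the j divisible by e_T gives psi(<[b^e_T]>). *)

From mathcomp Require Import all_boot all_fingroup all_algebra all_solvable.
From mathcomp Require Import zify.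
Set Implicit Arguments. Unset Strict Implicit. Unset Printing Implicit Defensive.

Lemma sum_imsetT_card (I T : finType) (A : {set T}) (f : I -> T) (F : T -> nat) :
  f @: setT = A -> #|I| = #|A| -> \sum_(y in A) F y = \sum_i F (f i).
Proof.
move=> fA cardIA.
have injf : {in setT &, injective f} by apply/imset_injP; rewrite fA cardsT cardIA.
by rewrite -fA big_imset //=; apply: eq_bigl => i; rewrite inE.
Qed.

Lemma psi_cycleE (gT : finGroupType) (x : gT) :
  psi <[x]>%g = \sum_(i < #[x]%g) #[x ^+ i]%g.
Proof.
rewrite /psi (@sum_imsetT_card _ _ _ (fun i : 'I_#[x]%g => (x ^+ i)%g)) ?card_ord //.
apply/setP=> y; apply/imsetP/idP => [[i _ ->]|/cyclePmin[i lti ->]]; first exact: mem_cycle.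
by exists (Ordinal lti).
Qed.

Lemma sum_ord_dvdn e N (F : nat -> nat) : 0 < e ->
  \sum_(j < e * N | e %| j) F j = \sum_(l < N) F (e * l).
Proof.
move=> e_gt0.
have lt_mul (l : 'I_N) : e * l < e * N by rewrite ltn_pmul2l.
have lt_div (j : 'I_(e * N)) : j %/ e < N by rewrite ltn_divLR // [N * e]mulnC.
rewrite (reindex_onto (fun l => Ordinal (lt_mul l)) (fun j => Ordinal (lt_div j))) /=.
  by apply: eq_bigl => l; rewrite dvdn_mulr ?dvdnn //= -val_eqE /= mulKn ?eqxx.
by move=> j e_dvd_j; apply: val_inj; rewrite /= mulnC divnK.
Qed.

Lemma sum_order_expg_dvdn (gT : finGroupType) (x : gT) e : 0 < e -> e %| #[x]%g ->
  \sum_(j < #[x]%g | e %| j) #[x ^+ j]%g = psi <[x ^+ e]>%g.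
Proof.
move=> e_gt0 e_dvd; rewrite psi_cycleE orderXdiv //.
rewrite -[#[x]%g in LHS](divnK e_dvd) mulnC (@sum_ord_dvdn _ _ (fun j => #[x ^+ j]%g)) //.
by apply: eq_bigr => l _; rewrite expgM.
Qed.

Lemma sum_order_expg_weighted (gT : finGroupType) (x : gT) (J : finType)
    (e c : J -> nat) :
  (forall T, 0 < e T) -> (forall T, e T %| #[x]%g) ->
  \sum_(j < #[x]%g) #[x ^+ j]%g * \sum_(T | e T %| j) c T =
    \sum_T c T * psi <[x ^+ e T]>%g.
Proof.
move=> e_gt0 e_dvd.
under [LHS]eq_bigr => j _ do rewrite big_distrr big_mkcond /=.
rewrite exchange_big; apply: eq_bigr => T _.
rewrite -sum_order_expg_dvdn // big_distrr [RHS]big_mkcond /=.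
by apply: eq_bigr => j _; case: ifP; rewrite ?muln0 // mulnC.
Qed.

(* [psi_scale S u] sums the additive orders of the multiples of [S] in [Z_u]. *)
Definition psi_scale (S u : nat) : nat := \sum_(i < u) u %/ gcdn u (i * S).

Lemma psi_cycle (gT : finGroupType) (x : gT) : psi <[x]>%g = psi_scale 1 #[x]%g.
Proof. by rewrite psi_cycleE; apply: eq_bigr => i _; rewrite orderXgcd muln1. Qed.

Lemma psi_Zp N : 0 < N -> psi (Zp N) = psi_scale 1 N.
Proof.
case: N => // [[|N]] _.
  by rewrite /psi /Zp /= big_set1 order1 /psi_scale big_ord1 gcdn0 divnn.
by rewrite /Zp /= Zp_cycle psi_cycle order_Zp1.
Qed.

Lemma leq_psi_scale1 N : N <= psi_scale 1 N.
Proof.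
case: N => // N; rewrite /psi_scale big_ord_recr /= muln1.
by rewrite (eqP (coprimeSn N)) divn1 leq_addl.
Qed.

Lemma gcdn_coprimeM u v y : coprime u v -> gcdn (u * v) y = gcdn u y * gcdn v y.
Proof.
move=> cuv; apply/eqP; rewrite eqn_dvd; apply/andP; split.
  have dvd_uy_v : gcdn (u * v) y %| gcdn u y * v.
    by rewrite muln_gcdl dvdn_gcd dvdn_gcdl dvdn_mulr ?dvdn_gcdr.
  by rewrite muln_gcdr dvdn_gcd dvd_uy_v dvdn_mull ?dvdn_gcdr.
have cuvy : coprime (gcdn u y) (gcdn v y).
  exact: coprime_dvdl (dvdn_gcdl _ _) (coprime_dvdr (dvdn_gcdl _ _) cuv).
by rewrite dvdn_gcd dvdn_mul ?dvdn_gcdl // Gauss_dvd // !dvdn_gcdr.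
Qed.

Lemma divn_gcdn_coprimeM u v y : coprime u v ->
  (u * v) %/ gcdn (u * v) y = (u %/ gcdn u y) * (v %/ gcdn v y).
Proof.
move=> cuv.
by rewrite gcdn_coprimeM // divnMA -divn_mulAC ?muln_divA ?dvdn_gcdl.
Qed.

Lemma sum_ord_crt u v (F G : nat -> nat) : 0 < u -> 0 < v -> coprime u v ->
  \sum_(i < u * v) F (i %% u) * G (i %% v) = (\sum_(i < u) F i) * (\sum_(i < v) G i).
Proof.
move=> u0 v0 cuv; rewrite big_distrlr pair_big /=.
pose h (i : 'I_(u * v)) := (Ordinal (ltn_pmod i u0), Ordinal (ltn_pmod i v0)).
have injh : injective h.
  move=> i j [/eqP eq_u /eqP eq_v]; apply/val_inj/eqP => /=.
  rewrite -(modn_small (ltn_ord i)) -(modn_small (ltn_ord j)).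
  by rewrite chinese_remainder // eq_u eq_v.
have bijh : bijective h by apply: inj_card_bij => //; rewrite card_prod !card_ord.
by rewrite (reindex h (onW_bij _ bijh)).
Qed.

Lemma psi_scaleM S u v : 0 < u -> 0 < v -> coprime u v ->
  psi_scale S (u * v) = psi_scale S u * psi_scale S v.
Proof.
move=> u0 v0 cuv; rewrite /psi_scale.
rewrite -(sum_ord_crt (fun x => u %/ gcdn u (x * S)) (fun x => v %/ gcdn v (x * S))) //.
apply: eq_bigr => i _; rewrite divn_gcdn_coprimeM //.
have gcdn_modM w : gcdn w (i %% w * S) = gcdn w (i * S).
  by rewrite -gcdn_modr modnMml gcdn_modr.
by rewrite !gcdn_modM.
Qed.

Lemma prod_coprime_multiplicative (I : finType) (A : pred I) (P : I -> nat)
    (F : nat -> nat) :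
  (forall u v, 0 < u -> 0 < v -> coprime u v -> F (u * v) = F u * F v) -> F 1 = 1 ->
  (forall i, 0 < P i) -> (forall i j, i != j -> coprime (P i) (P j)) ->
  F (\prod_(i | A i) P i) = \prod_(i | A i) F (P i).
Proof.
move=> FM F1 P_gt0 P_coprime; rewrite -big_filter -[RHS]big_filter.
have : uniq [seq i <- index_enum I | A i] by rewrite filter_uniq ?index_enum_uniq.
elim: [seq i <- _ | _] => [|i s IHs]; first by rewrite !big_nil.
rewrite /= => /andP[i_notin_s uniq_s]; rewrite !big_cons -IHs // FM ?prodn_gt0 //.
rewrite big_seq; apply: (big_ind (coprime (P i))) => [|x y|j j_in_s].
- exact: coprimen1.
- by rewrite coprimeMr => -> ->.
- by apply: P_coprime; apply: contraNneq i_notin_s => ->.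
Qed.

Lemma psi_scale_coprime S u : coprime u S -> psi_scale S u = psi_scale 1 u.
Proof. by move=> cuS; apply: eq_bigr => i _; rewrite Gauss_gcdl // muln1. Qed.

Lemma psi_scale_dvd S u : 0 < u -> u %| S -> psi_scale S u = u.
Proof.
move=> u0 uS; rewrite /psi_scale (eq_bigr (fun _ => 1)) ?sum1_card ?card_ord // => i _.
by rewrite (gcdn_idPl _) ?divnn ?u0 // dvdn_mull.
Qed.

Lemma sum_expn_mod1 x d q : x = 1 %[mod q] -> \sum_(t < d) x ^ t = d %[mod q].
Proof.
move=> x1; rewrite -modn_summ (eq_bigr (fun _ => 1 %% q)).
  by rewrite sum_nat_const card_ord modnMmr muln1.
by move=> t _; rewrite -modnXm x1 modnXm exp1n.
Qed.

Lemma eqn_mod1_dvd x q : 0 < x -> (x == 1 %[mod q]) = (q %| x.-1).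
Proof. by move=> x0; rewrite eqn_mod_dvd // subn1. Qed.

(* [q] divides [x^d - 1 = (x - 1) (1 + x + ... + x^(d-1))]: for a prime power [q]
   coprime to [d] it divides the geometric sum unless [x = 1 (mod q)], in which
   case the sum is [d (mod q)], a unit. *)
Lemma psi_scale_geom_prime_power p al x d :
  prime p -> 0 < al -> 0 < x -> coprime (p ^ al) d -> x ^ d = 1 %[mod p ^ al] ->
  psi_scale (\sum_(t < d) x ^ t) (p ^ al) =
    if x == 1 %[mod p ^ al] then psi_scale 1 (p ^ al) else p ^ al.
Proof.
move=> p_pr al_gt0 x_gt0 coprime_d xd1; set S := \sum_(t < d) x ^ t.
have dvd_xS : p ^ al %| x.-1 * S.
  by rewrite -predn_exp -eqn_mod1_dvd; [exact/eqP | rewrite expn_gt0 x_gt0].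
have [/eqP x1|x_neq1] := ifPn.
  by rewrite psi_scale_coprime // -coprime_modr sum_expn_mod1 // coprime_modr.
rewrite psi_scale_dvd ?expn_gt0 ?prime_gt0 //.
have [p_dvd_x|p_ndvd_x] := boolP (p %| x.-1).
  suff cS : coprime (p ^ al) S.
    by move: dvd_xS; rewrite Gauss_dvdl // -eqn_mod1_dvd // (negbTE x_neq1).
  rewrite coprime_pexpl // -coprime_modr sum_expn_mod1 ?coprime_modr.
  - by rewrite -(coprime_pexpl _ _ al_gt0).
  - by apply/eqP; rewrite eqn_mod1_dvd.
suff cx : coprime (p ^ al) x.-1 by rewrite -(Gauss_dvdr _ cx).
by rewrite coprime_pexpl // prime_coprime.
Qed.

Lemma totient_leq q : totient q <= q.
Proof.
rewrite totient_count_coprime (@leq_trans (\sum_(0 <= d < q) 1)) //.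
  exact: leq_sum (fun d _ => leq_b1 _).
by rewrite sum_nat_const_nat subn0 muln1.
Qed.

Section OrderModulo.

Variables q r : nat.
Hypotheses (q_gt0 : 0 < q) (r_coprime : coprime r q).

Let unit_exp e := r ^ e.+1 == 1 %[mod q].

Let has_unit_exp : has unit_exp (iota 0 q).
Proof.
apply/hasP; exists (totient q).-1.
  by rewrite mem_iota (leq_trans _ (totient_leq q)) // prednK ?totient_gt0.
by rewrite /unit_exp prednK ?totient_gt0 // Euler_exp_totient.
Qed.

Let find_unit_exp_lt : find unit_exp (iota 0 q) < q.
Proof. by rewrite -[q in _ < q](size_iota 0) -has_find. Qed.

Lemma expn_ordmod : r ^ ordmod q r = 1 %[mod q].
Proof. by apply/eqP; have := nth_find 0 has_unit_exp; rewrite nth_iota. Qed.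

Lemma expn_lt_ordmod e : 0 < e < ordmod q r -> (r ^ e == 1 %[mod q]) = false.
Proof.
case: e => // e /andP[_ lt_e]; have := before_find 0 lt_e.
by rewrite nth_iota // ltnW // (leq_trans lt_e).
Qed.

Lemma ordmod_dvdP j : (r ^ j == 1 %[mod q]) = (ordmod q r %| j).
Proof.
rewrite {1}(divn_eq j (ordmod q r)) expnD [_ %/ _ * _]mulnC expnM.
rewrite -modnMml -modnXm expn_ordmod.
rewrite modnXm exp1n modnMml mul1n /dvdn.
have [->|pos_rem] := posnP (j %% ordmod q r); first by rewrite eqxx.
by rewrite expn_lt_ordmod ?pos_rem ?ltn_pmod.
Qed.

End OrderModulo.

Lemma prod_if_expand_subsets (I : finType) (c : pred I) (P Q : I -> nat) :
  (forall i, P i <= Q i) ->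
  \prod_i (if c i then Q i else P i) =
  \sum_(T : {set I} | [forall i in T, c i])
     (\prod_(i in ~: T) P i) * \prod_(i in T) (Q i - P i).
Proof.
move=> lePQ; rewrite [RHS]big_mkcond /=.
rewrite (eq_bigr (fun i => (if c i then Q i - P i else 0) + P i)); last first.
  by move=> i _; case: (c i); rewrite ?subnK.
rewrite bigA_distr; apply: eq_bigr => T _; rewrite (bigID (mem T)) /= mulnC.
rewrite [X in X * _](eq_bigr P); last by move=> i; case: ifP.
under [\prod_(i in ~: T) _]eq_bigl => i do rewrite in_setC.
rewrite [X in _ * X](eq_bigr (fun i => if c i then Q i - P i else 0)); last by move=> i ->.
have [/forall_inP cT|] := boolP [forall i in T, c i].
  by congr (_ * _); apply: eq_bigr => i /cT ->.
rewrite negb_forall_in => /exists_inP[i iT /negbTE ci].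
by rewrite [X in _ * X](bigD1 i) //= ci mul0n muln0.
Qed.

Section ConjugationPower.

Local Open Scope group_scope.

Variables (gT : finGroupType) (a y : gT) (s : nat).
Hypothesis conj_a : a ^ y = a ^+ s.

Lemma conjg_expg_pow j : a ^ (y ^+ j) = a ^+ (s ^ j)%N.
Proof.
elim: j => [|j IHj]; first by rewrite conjg1 expn0 expg1.
by rewrite expgSr conjgM IHj conjXg conj_a -expgM expnS mulnC.
Qed.

Lemma expg_mul_conj i k :
  (y * a ^+ i) ^+ k = y ^+ k * a ^+ (i * \sum_(t < k) s ^ t)%N.
Proof.
elim: k => [|k IHk]; first by rewrite big_ord0 muln0 !expg0 mulg1.
rewrite expgS IHk !mulgA -[y * a ^+ i * y ^+ k]mulgA (conjgC (a ^+ i)) conjXg.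
rewrite conjg_expg_pow -expgM !mulgA -expgS -mulgA -expgD big_ord_recr /=.
by rewrite mulnDr addnC [(s ^ k * i)%N]mulnC.
Qed.

Lemma order_mul_conj i : <[a]> :&: <[y]> = 1 ->
  #[y * a ^+ i] = (#[y] * #[a ^+ (i * \sum_(t < #[y]) s ^ t)])%N.
Proof.
move=> tI; set g := y * a ^+ i.
have dvd_y_g : #[y] %| #[g].
  have := expg_order g; rewrite /g expg_mul_conj => /(canRL (mulgK _)).
  rewrite mul1g => y_eq.
  suff : y ^+ #[g] \in <[a]> :&: <[y]> by rewrite tI inE order_dvdn.
  by rewrite inE mem_cycle y_eq groupV mem_cycle.
by rewrite -(divnK dvd_y_g) mulnC -orderXdiv // /g expg_mul_conj expg_order mul1g.
Qed.

End ConjugationPower.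

Section MetacyclicProduct.

Local Open Scope group_scope.

Variables (gT : finGroupType) (a b : gT) (r : nat).
Hypothesis conj_a : a ^ b = a ^+ r.

Lemma gen_set2_conj : <<[set a; b]>> = <[b]> * <[a]>.
Proof.
have nab : <[b]> \subset 'N(<[a]>).
  rewrite cycle_subG; apply/normP; apply/eqP.
  by rewrite eqEcard cardJg leqnn andbT -cycleJ conj_a cycleX.
by rewrite -norm_joinEl // joingC joing_idl joing_idr.
Qed.

Lemma ZM_cycles m n : 0 < m -> 0 < n -> a ^+ m = 1 -> b ^+ n = 1 ->
  #|<<[set a; b]>>| = (m * n)%N ->
  [/\ #[a] = m, #[b] = n & <[a]> :&: <[b]> = 1].
Proof.
move=> m_gt0 n_gt0 am1 bn1 card_ab.
have le_a : #[a] <= m by rewrite dvdn_leq // order_dvdn am1.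
have le_b : #[b] <= n by rewrite dvdn_leq // order_dvdn bn1.
have := mul_cardG <[b]> <[a]>; rewrite -gen_set2_conj card_ab setIC -!/(order _).
have := cardG_gt0 (<[a]> :&: <[b]>)%G; set c := #|_ :&: _| => c_gt0 card_eq.
have c1 : c = 1%N by nia.
by split; [nia | nia | apply/eqP; rewrite trivg_card1 -/c c1].
Qed.

Lemma psi_mul_cycles : <[a]> :&: <[b]> = 1 ->
  psi (<[b]> * <[a]>) =
    \sum_(j < #[b]) #[b ^+ j] * psi_scale (\sum_(t < #[b ^+ j]) (r ^ j) ^ t) #[a].
Proof.
move=> tI; pose f (x : 'I_#[b] * 'I_#[a]) := b ^+ x.1 * a ^+ x.2.
rewrite /psi (@sum_imsetT_card _ _ _ f); last first.
- by have := mul_cardG <[b]> <[a]>; rewrite setIC tI cards1 muln1 card_prod !card_ord => <-.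
- apply/setP => x; apply/imsetP/idP => [[[j i] _ ->]|]; first by rewrite mem_mulg ?mem_cycle.
  case/mulsgP=> _ _ /cyclePmin[j lt_j ->] /cyclePmin[i lt_i ->] ->.
  by exists (Ordinal lt_j, Ordinal lt_i).
rewrite -(pair_big xpredT xpredT (fun j i => #[f (j, i)])) /=.
apply: eq_bigr => j _; rewrite big_distrr /=; apply: eq_bigr => i _.
have tIj : <[a]> :&: <[b ^+ j]> = 1.
  by apply/trivgP; rewrite -tI setIS ?cycleX.
by rewrite /f /= (order_mul_conj (conjg_expg_pow conj_a j) _ tIj) [#[a ^+ _]]orderXgcd.
Qed.

End MetacyclicProduct.

Section PrimePowerFactors.

Variables (I : finType) (p alpha : I -> nat).
Hypotheses (p_prime : forall i, prime (p i)) (p_inj : injective p)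
  (alpha_gt0 : forall i, 0 < alpha i).

Local Notation q i := (p i ^ alpha i).
Local Notation m := (\prod_i q i).

Lemma prime_power_gt0 i : 0 < q i.
Proof. by rewrite expn_gt0 prime_gt0. Qed.

Lemma prime_power_coprime i j : i != j -> coprime (q i) (q j).
Proof.
move=> neq_ij; rewrite coprime_pexpl ?coprime_pexpr // prime_coprime //.
by rewrite dvdn_prime2 //; apply: contra neq_ij => /eqP/p_inj ->.
Qed.

Lemma prime_power_dvd_prod i : q i %| m.
Proof. by rewrite (bigD1 i) //= dvdn_mulr. Qed.

Lemma psi_scale_prod S : psi_scale S m = \prod_i psi_scale S (q i).
Proof.
apply: prod_coprime_multiplicative prime_power_coprime.
- exact: psi_scaleM.
- by rewrite /psi_scale big_ord1 gcd1n.
- exact: prime_power_gt0.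
Qed.

Lemma psi_scale_geom_prod x d : 0 < x -> coprime m d -> x ^ d = 1 %[mod m] ->
  psi_scale (\sum_(t < d) x ^ t) m =
    \prod_i (if x == 1 %[mod q i] then psi_scale 1 (q i) else q i).
Proof.
move=> x_gt0 coprime_d xd1; rewrite psi_scale_prod; apply: eq_bigr => i _.
apply: psi_scale_geom_prime_power => //.
  exact: coprime_dvdl (prime_power_dvd_prod i) coprime_d.
by rewrite -(modn_dvdm _ (prime_power_dvd_prod i)) xd1 modn_dvdm ?prime_power_dvd_prod.
Qed.

Variables (n r : nat).
Hypotheses (n_gt0 : 0 < n) (r_gt0 : 0 < r) (m_coprime_n : coprime m n)
  (r_exp_n : r ^ n = 1 %[mod m]).

Local Notation e T := (\big[lcmn/1%N]_(i in (T : {set I})) ordmod (q i) r).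
Local Notation c T :=
  ((\prod_(i in ~: (T : {set I})) q i) * \prod_(i in T) (psi_scale 1 (q i) - q i)).

Lemma coprime_r_prime_power i : coprime r (q i).
Proof.
apply: (coprime_dvdr (prime_power_dvd_prod i)).
by rewrite -(coprime_pexpl _ _ n_gt0) -coprime_modl r_exp_n coprime_modl coprime1n.
Qed.

Lemma exponent_dvdn T : e T %| n.
Proof.
apply/dvdn_biglcmP => i _.
rewrite -ordmod_dvdP ?prime_power_gt0 ?coprime_r_prime_power //.
by rewrite -(modn_dvdm _ (prime_power_dvd_prod i)) r_exp_n modn_dvdm ?prime_power_dvd_prod.
Qed.

Lemma psi_scale_geom_ZM j d : d %| n -> n %| j * d ->
  psi_scale (\sum_(t < d) (r ^ j) ^ t) m = \sum_(T : {set I} | e T %| j) c T.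
Proof.
move=> d_dvd_n n_dvd_jd; rewrite psi_scale_geom_prod ?expn_gt0 ?r_gt0 //.
- rewrite (eq_bigr (fun i => if ordmod (q i) r %| j then psi_scale 1 (q i) else q i)).
    rewrite prod_if_expand_subsets => [|i]; last exact: leq_psi_scale1.
    by apply: eq_bigl => T; apply/forall_inP/dvdn_biglcmP.
  by move=> i _; rewrite ordmod_dvdP ?prime_power_gt0 ?coprime_r_prime_power.
- exact: coprime_dvdr d_dvd_n m_coprime_n.
- have [l jd_eq] := dvdnP n_dvd_jd.
  by rewrite -expnM jd_eq mulnC expnM -modnXm r_exp_n modnXm exp1n.
Qed.

End PrimePowerFactors.

Theorem proposition2p3
  (m n r k : nat) (p alpha : 'I_k -> nat)
  (gT : finGroupType) (a b : gT) :
  0 < m -> 0 < n -> 0 < r ->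
  coprime m n -> coprime m (r - 1) -> r ^ n = 1 %[mod m] ->
  0 < k -> (forall i, prime (p i)) -> injective p -> (forall i, 0 < alpha i) ->
  m = \prod_(i < k) p i ^ alpha i ->
  (a ^+ m = 1)%g -> (b ^+ n = 1)%g -> (a ^ b = a ^+ r)%g ->
  #|<<[set a; b]>>%g| = m * n ->
  psi <<[set a; b]>>%g =
    m * psi (Zp n)
    + \sum_(T : {set 'I_k} | T != set0)
        (\prod_(i in ~: T) p i ^ alpha i)
        * (\prod_(i in T) (psi (Zp (p i ^ alpha i)) - p i ^ alpha i))
        * psi <[b ^+ (\big[lcmn/1%N]_(i in T) ordmod (p i ^ alpha i) r)]>%g.
Proof.
move=> m_gt0 n_gt0 r_gt0 cmn _ rn _ p_prime p_inj alpha_gt0 mE am1 bn1 ab card_ab.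
have [oa ob tI] := ZM_cycles ab m_gt0 n_gt0 am1 bn1 card_ab; subst m.
rewrite (gen_set2_conj ab) (psi_mul_cycles ab tI) oa.
have ordb_dvd (j : 'I_#[b]%g) : #[b ^+ j]%g %| n by rewrite -ob orderXdvd.
have n_dvd_ordb (j : 'I_#[b]%g) : n %| j * #[b ^+ j]%g.
  by rewrite -ob order_dvdn expgM expg_order.
have psi_scale_j j := psi_scale_geom_ZM p_prime p_inj alpha_gt0 n_gt0 r_gt0 cmn rn
  (ordb_dvd j) (n_dvd_ordb j).
under eq_bigr => j _ do rewrite psi_scale_j.
rewrite sum_order_expg_weighted => [|T|T]; first last.
- by rewrite ob exponent_dvdn.
- by rewrite (dvdn_gt0 n_gt0) ?exponent_dvdn.
rewrite (bigD1 set0) //= !big_set0 muln1 setC0 expg1 psi_cycle ob -psi_Zp //.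
congr (_ * _ + _); first by apply: eq_bigl => i; rewrite inE.
apply: eq_bigr => T _.
by congr (_ * _ * _); apply: eq_bigr => i _; rewrite psi_Zp ?expn_gt0 ?prime_gt0.
Qed.
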